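(* Suppose $1/n\ll\varepsilon_3\ll1$. Let $G$ be a digraph on $n$ vertices with $\delta^0(G)\geq n/2$ and let $A,B,S,T$ be a partition of $V(G)$ satisfying the $AB$-conditions, with sizes $a,b,s,t$ and $b=a+d$ for some $d>0$. Then $E(B\cup T,B)$ contains a matching of size $d+2$, i.e. $d+2$ pairwise vertex-disjoint edges each going from $B\cup T$ to $B$.
   Context: Digraphs have no loops and at most one edge in each direction between two vertices; $\delta^0$ is the minimum semidegree; $E(X,Y)$ is the set of edges $xy$ with $x\in X,y\in Y$. $d^+_X(x)=|N^+(x)\cap X|$, $d^-_X(x)=|N^-(x)\cap X|$, $d^\pm_X(x)\geq c$ means both $\geq c$ and $d^\pm_X(x)<c$ means both $<c$. $G[A,B]$ is the digraph on $A\cup B$ with edges of $G$ between $A$ and $B$ in either direction. The $AB$-conditions on a partition $A,B,S,T$ of sizes $a,b,s,t$: $a\leq b$, $s\leq t$; $\lfloor n/2\rfloor-\varepsilon_3 n\leq a,b\leq\lceil n/2\rceil+\varepsilon_3n$; $\delta^0(G[A,B])\geq n/50$; $d^\pm_B(x)\geq n/2-\varepsilon_3n$ for all but at most $\varepsilon_3n$ vertices $x\in A$; $d^\pm_A(x)\geq n/2-\varepsilon_3n$ for all but at most $\varepsilon_3n$ vertices $x\in B$; $s+t\leq\varepsilon_3n$; $d^-_A(x),d^+_B(x)\geq n/50$ for all $x\in S$; $d^-_B(x),d^+_A(x)\geq n/50$ for all $x\in T$; if $a<b$ then $d^\pm_B(x)<n/20$ for all $x\in B$, $d^-_B(x)<n/20$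 for all $x\in S$ and $d^+_B(x)<n/20$ for all $x\in T$. The hierarchy $\alpha\ll\beta$ means $\alpha$ is sufficiently small as a function of $\beta$. *)

(* Digraphs: a finite vertex type V with an irreflexive
   relation e : rel V (e x y = "xy is an edge"); a rel automatically has at
   most one edge in each direction between two vertices. Real-valued
   thresholds are compared in rat. *)
From HB Require Import structures.
From mathcomp Require Import all_boot all_order all_algebra.
Set Implicit Arguments. Unset Strict Implicit. Unset Printing Implicit Defensive.
Import Order.TTheory GRing.Theory Num.Theory.
Local Open Scope ring_scope.

Section Digraph.
Variables (V : finType) (e : rel V).

Definition outdeg_in (X : {set V}) (x : V) : nat := #|[set y in X | e x y]|.
Definition indeg_in (X : {set V}) (x : V) : nat := #|[set y in X | e y x]|.

Definition nR : rat := (#|V|)%:R.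

Definition min_semideg_ge (c : rat) : Prop :=
  forall x : V, c <= (outdeg_in [set: V] x)%:R /\ c <= (indeg_in [set: V] x)%:R.

Definition bip_rel (A B : {set V}) : rel V :=
  fun x y => e x y && (((x \in A) && (y \in B)) || ((x \in B) && (y \in A))).

Definition bip_min_semideg_ge (A B : {set V}) (c : rat) : Prop :=
  forall x, x \in A :|: B ->
    c <= (#|[set y in A :|: B | bip_rel A B x y]|)%:R /\
    c <= (#|[set y in A :|: B | bip_rel A B y x]|)%:R.

Definition AB_conditions (eps3 : rat) (A B S T : {set V}) : Prop :=
  let n := nR in
  ([&& [disjoint A & B], [disjoint A & S], [disjoint A & T],
       [disjoint B & S], [disjoint B & T] & [disjoint S & T]] /\
   A :|: B :|: S :|: T = [set: V]) /\
  (#|A| <= #|B|)%N /\ (#|S| <= #|T|)%N /\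
  ((#|V|./2)%:R - eps3 * n <= (#|A|)%:R /\
   (#|A|)%:R <= (uphalf #|V|)%:R + eps3 * n /\
   (#|V|./2)%:R - eps3 * n <= (#|B|)%:R /\
   (#|B|)%:R <= (uphalf #|V|)%:R + eps3 * n) /\
  bip_min_semideg_ge A B (n / 50%:R) /\
  (#|[set x in A | ~~ ((n / 2%:R - eps3 * n <= (outdeg_in B x)%:R) &&
                        (n / 2%:R - eps3 * n <= (indeg_in B x)%:R))]|)%:R
     <= eps3 * n /\
  (#|[set x in B | ~~ ((n / 2%:R - eps3 * n <= (outdeg_in A x)%:R) &&
                        (n / 2%:R - eps3 * n <= (indeg_in A x)%:R))]|)%:R
     <= eps3 * n /\
  (#|S| + #|T|)%:R <= eps3 * n /\
  (forall x, x \in S -> n / 50%:R <= (indeg_in A x)%:R /\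
                        n / 50%:R <= (outdeg_in B x)%:R) /\
  (forall x, x \in T -> n / 50%:R <= (indeg_in B x)%:R /\
                        n / 50%:R <= (outdeg_in A x)%:R) /\
  ((#|A| < #|B|)%N ->
     (forall x, x \in B -> (outdeg_in B x)%:R < n / 20%:R /\
                           (indeg_in B x)%:R < n / 20%:R) /\
     (forall x, x \in S -> (indeg_in B x)%:R < n / 20%:R) /\
     (forall x, x \in T -> (outdeg_in B x)%:R < n / 20%:R)).

Definition matching_from_to (X Y : {set V}) (M : {set V * V}) : Prop :=
  (forall p, p \in M -> [/\ e p.1 p.2, p.1 \in X & p.2 \in Y]) /\
  (forall p q, p \in M -> q \in M -> p != q ->
     [/\ p.1 != q.1, p.1 != q.2, p.2 != q.1 & p.2 != q.2]).

End Digraph.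

From HB Require Import structures.
From mathcomp Require Import all_boot all_order all_algebra.
From mathcomp Require Import lra.
Set Implicit Arguments.
Unset Strict Implicit.
Unset Printing Implicit Defensive.
Import Order.TTheory GRing.Theory Num.Theory.
Local Open Scope ring_scope.

(* A vertex of B has in-degree at least n/2, and only the a + s vertices of
   A :|: S lie outside B :|: T; as s <= t this leaves at least (b - a)/2
   in-neighbours in B :|: T.  Every vertex of B :|: T has fewer than n/20
   out-neighbours in B.  So a greedy matching from B :|: T to B cannot get
   stuck before size d + 2: with m edges chosen and no edge between unmatched
   vertices, the b - 2m unmatched vertices of B would receive at least
   (b - a)/2 edges each from the 2m matched vertices, which send fewer than
   2m n/20 edges altogether; this is impossible for m <= d + 1 <= 2 + n/50
   since b is about n/2. *)

Section Degrees.
Variables (V : finType) (e : rel V).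

Lemma indeg_inE (U : {set V}) (y : V) : indeg_in e U y = (\sum_(u in U) e u y)%N.
Proof.
rewrite /indeg_in -sum1_card big_set /= big_mkcondr /=.
by apply: eq_bigr => u _; case: (e u y).
Qed.

Lemma outdeg_inE (W : {set V}) (u : V) : outdeg_in e W u = (\sum_(y in W) e u y)%N.
Proof.
rewrite /outdeg_in -sum1_card big_set /= big_mkcondr /=.
by apply: eq_bigr => y _; case: (e u y).
Qed.

Lemma sum_indeg_in (U W : {set V}) :
  (\sum_(y in W) indeg_in e U y = \sum_(u in U) outdeg_in e W u)%N.
Proof.
under eq_bigr do rewrite indeg_inE.
by rewrite exchange_big; apply: eq_bigr => u _; rewrite outdeg_inE.
Qed.

Lemma indeg_inT_le (X Z : {set V}) (y : V) :
  X :|: Z = [set: V] -> (indeg_in e [set: V] y <= indeg_in e X y + #|Z|)%N.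
Proof.
move=> XZ; rewrite /indeg_in; apply: leq_trans (leq_card_setU _ Z).
apply: subset_leq_card; apply/subsetP => z; rewrite !inE /= => ezy.
by move: (in_setT z); rewrite -XZ inE ezy andbT.
Qed.

End Degrees.

Section Matchings.
Variables (V : finType) (e : rel V) (X Y : {set V}).
Implicit Types (M : {set V * V}) (u y : V).

Definition matched M : {set V} := [set p.1 | p in M] :|: [set p.2 | p in M].

Lemma card_matched M : (#|matched M| <= 2 * #|M|)%N.
Proof.
apply: leq_trans (leq_card_setU _ _) _.
by rewrite mul2n -addnn; apply: leq_add; apply: leq_imset_card.
Qed.

Lemma matched_subset M :
  matching_from_to e X Y M -> matched M \subset X :|: Y.
Proof.
move=> [MXY _]; apply/subsetP => x.
by rewrite !inE => /orP[] /imsetP[p /MXY[_ pX pY] ->]; rewrite ?pX ?pY ?orbT.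
Qed.

Lemma notin_matched M p x :
  p \in M -> x \notin matched M -> (p.1 != x) && (p.2 != x).
Proof.
move=> pM; apply: contraR; rewrite negb_and !negbK inE.
by case/orP=> /eqP <-; apply/orP; [left | right]; apply/imsetP; exists p.
Qed.

Lemma matching_from_to0 : matching_from_to e X Y set0.
Proof. by split=> p; rewrite inE. Qed.

Lemma matching_from_toU1 M u y :
  matching_from_to e X Y M -> e u y -> u \in X -> y \in Y ->
  u \notin matched M -> y \notin matched M ->
  matching_from_to e X Y ((u, y) |: M).
Proof.
move=> [MXY Mdisj] euy uX yY uM yM; split.
  by move=> p /setU1P[-> | /MXY].
move=> p q /setU1P[-> | pM] /setU1P[-> | qM]; first by rewrite eqxx.
- have /andP[u1 u2] := notin_matched qM uM.
  have /andP[y1 y2] := notin_matched qM yM.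
  by split; rewrite /= eq_sym.
- have /andP[u1 u2] := notin_matched pM uM.
  by have /andP[y1 y2] := notin_matched pM yM.
- exact: Mdisj.
Qed.

Lemma card_matchingU1 M u y :
  u \notin matched M -> #|(u, y) |: M| = #|M|.+1.
Proof.
move=> uM; rewrite cardsU1; suff -> : (u, y) \notin M by [].
by apply: contra uM => uyM; rewrite inE; apply/orP; left; apply/imsetP; exists (u, y).
Qed.

End Matchings.

Section Greedy.
Variables (V : finType) (e : rel V) (X Y : {set V}) (delta Delta : rat).
Hypotheses (sub_YX : Y \subset X) (delta_ge0 : 0 <= delta) (Delta_ge0 : 0 <= Delta).
Hypothesis indeg_Y : forall y, y \in Y -> delta <= (indeg_in e X y)%:R.
Hypothesis outdeg_X : forall u, u \in X -> (outdeg_in e Y u)%:R <= Delta.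

Lemma exists_unmatched_edge M :
  matching_from_to e X Y M ->
  2 * #|M|%:R * Delta < delta * (#|Y|%:R - 2 * #|M|%:R) ->
  exists u y, [/\ u \in X :\: matched M, y \in Y :\: matched M & e u y].
Proof.
move=> HM room; set U := matched M; set W := Y :\: U.
(* Otherwise count the edges from [U] to [W] from both ends. *)
have [/existsP[u /andP[uXU /existsP[y /andP[yW euy]]]] | noedge] :=
  boolP [exists u in X :\: U, exists y in W, e u y]; first by exists u, y.
suff : delta * (#|Y|%:R - 2 * #|M|%:R) <= 2 * #|M|%:R * Delta by lra.
have sub_UX : U \subset X.
  by apply: subset_trans (matched_subset HM) _; rewrite subUset subxx sub_YX.
have cardU : #|U|%:R <= 2 * #|M|%:R :> rat by rewrite -natrM ler_nat card_matched.
have cardW : #|Y|%:R - #|U|%:R <= #|W|%:R :> rat.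
  have := cardsID U Y; move/(congr1 (fun k => k%:R : rat)); rewrite natrD.
  have : #|Y :&: U|%:R <= #|U|%:R :> rat by rewrite ler_nat subset_leq_card ?subsetIr.
  by rewrite -/W; lra.
have indeg_W y : y \in W -> delta <= (indeg_in e U y)%:R.
  move=> yW; have yY : y \in Y by move: yW; rewrite inE => /andP[].
  apply: le_trans (indeg_Y yY) _.
  rewrite ler_nat; apply: subset_leq_card; apply/subsetP => z; rewrite !inE.
  case/andP=> zX ezy; rewrite ezy andbT; apply: contraR noedge => zU.
  by apply/existsP; exists z; rewrite !inE zU zX /=; apply/existsP; exists y; rewrite yW.
have outdeg_U u : u \in U -> (outdeg_in e W u)%:R <= Delta.
  move=> uU; apply: le_trans (outdeg_X (subsetP sub_UX u uU)).
  rewrite ler_nat; apply: subset_leq_card; apply/subsetP => y; rewrite !inE.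
  by case/andP=> /andP[_ ->] ->.
have count_edges : delta * #|W|%:R <= #|U|%:R * Delta.
  apply: (@le_trans _ _ (\sum_(y in W) indeg_in e U y)%:R).
    by rewrite mulr_natr -sumr_const natr_sum; apply: ler_sum.
  by rewrite sum_indeg_in natr_sum mulr_natl -sumr_const; apply: ler_sum.
have cardW' : #|Y|%:R - 2 * #|M|%:R <= #|W|%:R :> rat by lra.
have := ler_wpM2l delta_ge0 cardW'; have := ler_wpM2r Delta_ge0 cardU; lra.
Qed.

Lemma matching_extend M :
  matching_from_to e X Y M ->
  2 * #|M|%:R * Delta < delta * (#|Y|%:R - 2 * #|M|%:R) ->
  exists M', matching_from_to e X Y M' /\ #|M'| = #|M|.+1.
Proof.
move=> HM room; have [u [y [uXU yYU euy]]] := exists_unmatched_edge HM room.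
move: uXU yYU; rewrite !in_setD => /andP[uM uX] /andP[yM yY].
by exists ((u, y) |: M); split; [exact: matching_from_toU1 | exact: card_matchingU1].
Qed.

Lemma matching_greedy k :
  (forall m, (m < k)%N -> 2 * m%:R * Delta < delta * (#|Y|%:R - 2 * m%:R)) ->
  exists M, matching_from_to e X Y M /\ #|M| = k.
Proof.
elim: k => [|k IH] room.
  by exists set0; split; [exact: matching_from_to0 | exact: cards0].
have [M [HM cardM]] := IH (fun m lt_mk => room m (leqW lt_mk)).
by rewrite -cardM; apply: matching_extend HM _; rewrite cardM; apply: room.
Qed.

End Greedy.

Section Partition.
Variable V : finType.
Implicit Types X Y Z : {set V}.

Lemma disjoint_setUl X Y Z :
  [disjoint X :|: Y & Z] = [disjoint X & Z] && [disjoint Y & Z].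
Proof. by rewrite -!setI_eq0 setIUl setU_eq0. Qed.

Lemma card_setU_disjoint X Y : [disjoint X & Y] -> #|X :|: Y| = (#|X| + #|Y|)%N.
Proof. by move=> dXY; apply/eqP; rewrite (leq_card_setU X Y).2. Qed.

Lemma card_partition4 (A B S T : {set V}) :
  [&& [disjoint A & B], [disjoint A & S], [disjoint A & T],
      [disjoint B & S], [disjoint B & T] & [disjoint S & T]] ->
  A :|: B :|: S :|: T = [set: V] -> #|V| = (#|A| + #|B| + #|S| + #|T|)%N.
Proof.
case/and5P=> dAB dAS dAT dBS /andP[dBT dST] cover.
by rewrite -cardsT -cover !card_setU_disjoint // !disjoint_setUl ?dAS ?dBS ?dAT ?dBT ?dST.
Qed.

End Partition.

Lemma indeg_in_BT_ge (V : finType) (e : rel V) (A B S T : {set V}) (y : V) :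
  A :|: B :|: S :|: T = [set: V] ->
  #|V| = (#|A| + #|B| + #|S| + #|T|)%N -> (#|S| <= #|T|)%N ->
  #|V|%:R / 2 <= (indeg_in e [set: V] y)%:R :> rat ->
  (#|B|%:R - #|A|%:R) / 2 <= (indeg_in e (B :|: T) y)%:R :> rat.
Proof.
move=> cover cardV le_ST indegT.
have cover' : (B :|: T) :|: (A :|: S) = [set: V].
  by rewrite -cover; apply/setP => x; rewrite !inE; do 4 case: (_ \in _).
have := leq_trans (indeg_inT_le e y cover') (leq_add (leqnn _) (leq_card_setU A S)).
rewrite -(ler_nat rat) !natrD; move: indegT; rewrite cardV !natrD.
move: le_ST; rewrite -(ler_nat rat); lra.
Qed.

Lemma greedy_room (n a b m : nat) (eps : rat) :
  0 <= eps -> eps <= 1 / 100 -> (100 <= n)%N -> (a < b)%N ->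
  (n./2)%:R - eps * n%:R <= a%:R -> (n./2)%:R - eps * n%:R <= b%:R ->
  b%:R <= (uphalf n)%:R + eps * n%:R -> (m <= b - a + 1)%N ->
  2 * m%:R * (n%:R / 20) < (b%:R - a%:R) / 2 * (b%:R - 2 * m%:R) :> rat.
Proof.
move=> eps_ge0 eps_small n_large lt_ab a_ge b_ge b_le le_m.
have half_n : n%:R <= 2 * (n./2)%:R + 1 :> rat.
  rewrite -{1}(odd_double_half n) natrD -muln2 natrM.
  by have := leq_b1 (odd n); rewrite -(ler_nat rat); lra.
have uphalf_n : (uphalf n)%:R <= (n./2)%:R + 1 :> rat.
  rewrite uphalf_half natrD.
  by have := leq_b1 (odd n); rewrite -(ler_nat rat); lra.
have eps_n : eps * n%:R <= n%:R / 100.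
  by have := ler_wpM2r (ler0n rat n) eps_small; lra.
move: le_m; rewrite -(ler_nat rat) natrD natrB ?(ltnW lt_ab) // => le_m.
move: n_large lt_ab; rewrite -(ler_nat rat) -addn1 -(ler_nat rat) natrD.
move=> n_large lt_ab.
(* [b - a <= 1 + 2 eps n] forces [b - 2 m > 2 n / 5], and [m <= 2 (b - a)]. *)
have gap : 2 * n%:R / 5 < b%:R - 2 * m%:R :> rat by lra.
have : 0 <= (2 * (b%:R - a%:R) - m%:R) * n%:R :> rat by apply: mulr_ge0; lra.
have : 0 < (b%:R - a%:R) * (b%:R - 2 * m%:R - 2 * n%:R / 5) :> rat.
  by apply: mulr_gt0; lra.
lra.
Qed.

Theorem proposition6p2 :
  exists eps0 : rat, 0 < eps0 /\
  forall eps3 : rat, 0 < eps3 -> eps3 <= eps0 ->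
  exists N : nat,
  forall (V : finType) (e : rel V) (A B S T : {set V}),
    (N <= #|V|)%N ->
    irreflexive e ->
    min_semideg_ge e ((#|V|)%:R / 2%:R) ->
    AB_conditions e eps3 A B S T ->
    (#|A| < #|B|)%N ->
    exists M : {set V * V},
      matching_from_to e (B :|: T) B M /\ #|M| = ((#|B| - #|A|) + 2)%N.
Proof.
exists (1 / 100); split; first lra.
move=> eps eps_gt0 eps_small; exists 100%N => V e A B S T n_large _ semideg.
rewrite /AB_conditions /= => -[[disj cover] [_ [le_ST [[a_ge [_ [b_ge b_le]]] AB]]]] lt_ab.
have [outdeg_B [_ outdeg_T]] := AB.2.2.2.2.2.2 lt_ab.
have cardV := card_partition4 disj cover.
have lt_abR : #|A|%:R < #|B|%:R :> rat by rewrite ltr_nat.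
apply: (matching_greedy (delta := (#|B|%:R - #|A|%:R) / 2) (Delta := #|V|%:R / 20)).
- exact: subsetUl.
- lra.
- by rewrite divr_ge0 ?ler0n.
- by move=> y yB; apply: indeg_in_BT_ge cover cardV le_ST (semideg y).2.
- by move=> u /setUP[/outdeg_B[/ltW] | /outdeg_T/ltW].
- move=> m lt_m; apply: greedy_room (ltW eps_gt0) eps_small n_large lt_ab a_ge b_ge b_le _.
  by rewrite addnS ltnS in lt_m.
Qed.
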